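(* Let $\mathcal{D}=(X,\mathcal{B})$ be a quasi-symmetric $2$-$(56,12,9)$ design with block intersection numbers $0$ and $3$, and let $z\in X$. Then: (i) the derived design $\mathcal{D}^z$ is a $1$-$(55,11,9)$ design with $45$ blocks, and its dual design $(\mathcal{D}^z)^*$ is a $2$-$(45,9,2)$ design; (ii) the residual design $\mathcal{D}_z$ is a $1$-$(55,12,36)$ design with $165$ blocks, and every column of the $55\times 165$ (points by blocks) incidence matrix of $\mathcal{D}_z$ lies in $C^\perp$, where $C$ is the linear code over $GF(3)$ spanned by the columns of the $55\times 45$ (points by blocks) incidence matrix of $\mathcal{D}^z$ (both incidence matrices using the same ordering of the $55$ points of $X\setminus\{z\}$), and $C^\perp$ is its dual with respect to the standard inner product.
   Context: A $t$-$(v,k,\lambda)$ design is a pair $(X,\mathcal{B})$ with $|X|=v$ points and a collection $\mathcal{B}$ of $k$-subsets (blocks) such that every $t$-subset of points lies in exactly $\lambda$ blocks. A $2$-design is quasi-symmetric with intersection numbers $x<y$ if any two distinct blocks meet in exactly $x$ or $y$ points. For a point $z$, the derived design $\mathcal{D}^z$ has point set $X\setminus\{z\}$ and blocks $\{B\setminus\{z\}: B\in\mathcal{B}, z\in B\}$; the residual design $\mathcal{D}_z$ has point set $X\setminus\{z\}$ and blocks $\{B\in\mathcal{B}: z\notin B\}$. The dual design of a design has as points the blocks of the original and as blocks the points, with incidence preserved (incidence matrix transposed). The points-by-blocks incidence matrix $A=(a_{ij})$ has $a_{ij}=1$ if point $i$ lies in block $j$ and $0$ otherwise. *)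

From HB Require Import structures.
From mathcomp Require Import all_boot all_order all_algebra.
Set Implicit Arguments. Unset Strict Implicit. Unset Printing Implicit Defensive.
Import GRing.Theory.

(* A t-(v,k,lambda) design on the point set V : {set P}, whose blocks are
   indexed by J : {set I} (so repeated blocks are allowed), block j being
   blk j. *)
Definition tdesign (P I : finType) (V : {set P}) (J : {set I})
    (blk : I -> {set P}) (t v k lam : nat) : Prop :=
  #|V| = v /\
  (forall j, j \in J -> blk j \subset V /\ #|blk j| = k) /\
  (forall S : {set P}, S \subset V -> #|S| = t ->
     #|[set j in J | S \subset blk j]| = lam).

Definition quasi_symmetric (P I : finType) (J : {set I})
    (blk : I -> {set P}) (x y : nat) : Prop :=
  forall i j, i \in J -> j \in J -> i != j ->
    #|blk i :&: blk j| = x \/ #|blk i :&: blk j| = y.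

(* Derived design at z: points V :\ z, blocks B :\ z for blocks B containing z. *)
Definition der_blocks (P I : finType) (J : {set I}) (blk : I -> {set P}) (z : P)
  : {set I} := [set j in J | z \in blk j].
Definition der_blk (P I : finType) (blk : I -> {set P}) (z : P) : I -> {set P} :=
  fun j => blk j :\ z.

(* Residual design at z: points V :\ z, blocks not containing z. *)
Definition res_blocks (P I : finType) (J : {set I}) (blk : I -> {set P}) (z : P)
  : {set I} := [set j in J | z \notin blk j].

(* Dual design: points are the block indices J, blocks are indexed by the
   points p in V, block p being the set of blocks incident with p. *)
Definition dual_blk (P I : finType) (J : {set I}) (blk : I -> {set P}) :
  P -> {set I} := fun p => [set j in J | p \in blk j].

Definition incmx (F : fieldType) (P I : finType) (V : {set P}) (J : {set I})
    (blk : I -> {set P}) : 'M[F]_(#|V|, #|J|) :=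
  \matrix_(a < #|V|, b < #|J|)
     (((@enum_val P (mem V) a \in blk (@enum_val I (mem J) b)) : nat)%:R)%R.

Definition in_dual_code (F : fieldType) (m n : nat) (G : 'M[F]_(m, n))
    (u : 'rV[F]_n) : Prop :=
  forall w : 'rV[F]_n, (w <= G)%MS -> (u *m w^T = 0)%R.

(* Counting incident point-block pairs gives the replication number r = 45 and
   b = 210 blocks, and applying the 2-design property to pairs {p, z} gives the
   parameters of the derived and residual designs.  Two blocks through z cannot
   be disjoint, so they meet in exactly 3 points, i.e. in 2 points other than z:
   this makes the dual of the derived design a 2-(45,9,2) design.  Finally the
   product of the residual and derived incidence matrices records intersection
   sizes of distinct blocks, which are 0 or 3 and hence vanish over GF(3). *)

From HB Require Import structures.
From mathcomp Require Import all_boot all_order all_algebra.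
Set Implicit Arguments. Unset Strict Implicit.
Import GRing.Theory.

Lemma card_sep_sum (T : finType) (A : {set T}) (Q : pred T) :
  #|[set x in A | Q x]| = \sum_(x in A) Q x.
Proof.
rewrite -sum1_card (eq_bigl (fun x => (x \in A) && Q x)) => [|x]; last by rewrite inE.
by rewrite big_mkcondr; apply: eq_bigr => x _; case: (Q x).
Qed.

Lemma double_count (T U : finType) (A : {set T}) (B : {set U}) (R : T -> U -> bool) :
  \sum_(x in A) #|[set y in B | R x y]| = \sum_(y in B) #|[set x in A | R x y]|.
Proof.
rewrite (eq_bigr _ (fun x _ => card_sep_sum _ _)) exchange_big.
by apply: eq_bigr => y _; rewrite card_sep_sum.
Qed.

Section Designs.

Variables (P I : finType) (V : {set P}) (J : {set I}) (blk : I -> {set P}).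

Lemma tdesign1_replication v k r p :
  tdesign V J blk 1 v k r -> p \in V -> #|dual_blk J blk p| = r.
Proof.
move=> [_ [_ cover]] pV; rewrite -(cover [set p]) ?sub1set ?cards1 //.
by apply: eq_card => j; rewrite !inE sub1set.
Qed.

Lemma tdesign1_card_blocks v k r :
  tdesign V J blk 1 v k r -> #|J| * k = v * r.
Proof.
move=> D1; have [cardV [blkV _]] := D1.
have byPoints : \sum_(p in V) #|[set j in J | p \in blk j]| = v * r.
  rewrite -cardV -sum_nat_const; apply: eq_bigr => p pV.
  by rewrite -(tdesign1_replication D1 pV).
have byBlocks : \sum_(j in J) #|[set p in V | p \in blk j]| = #|J| * k.
  rewrite -sum_nat_const; apply: eq_bigr => j jJ.
  have [Vj <-] := blkV j jJ; apply: eq_card => p.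
  by rewrite inE andb_idl // => /(subsetP Vj).
by rewrite -byPoints -byBlocks double_count.
Qed.

Variables (v k lam : nat).
Hypothesis D2 : tdesign V J blk 2 v k lam.

Lemma tdesign2_pair p q : p \in V -> q \in V -> p != q ->
  #|dual_blk J blk p :&: dual_blk J blk q| = lam.
Proof.
have [_ [_ cover]] := D2 => pV qV pq.
rewrite -(cover [set p; q]) ?subUset ?sub1set ?pV ?qV ?cards2 ?pq //.
by apply: eq_card => j; rewrite !inE subUset !sub1set andbACA andbb.
Qed.

Lemma tdesign2_replication p :
  p \in V -> #|dual_blk J blk p| * k.-1 = lam * v.-1.
Proof.
have [cardV [blkV _]] := D2 => pV.
have byPoints : \sum_(q in V :\ p) #|[set j in dual_blk J blk p | q \in blk j]|
                = lam * v.-1.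
  rewrite -cardV (cardsD1 p V) pV add1n /= mulnC -sum_nat_const.
  apply: eq_bigr => q; rewrite !inE => /andP[qp qV].
  rewrite -(tdesign2_pair pV qV); last by rewrite eq_sym.
  apply: eq_card => j; rewrite !inE.
  by case: (j \in J) (p \in blk j) (q \in blk j) => [] [] [].
have byBlocks : \sum_(j in dual_blk J blk p) #|[set q in V :\ p | q \in blk j]|
                = #|dual_blk J blk p| * k.-1.
  rewrite -sum_nat_const; apply: eq_bigr => j.
  rewrite inE => /andP[jJ pj]; have [Vj <-] := blkV j jJ.
  rewrite (cardsD1 p (blk j)) pj add1n /=; apply: eq_card => q.
  rewrite !inE; case: (boolP (q \in blk j)) => [/(subsetP Vj) ->|]; by rewrite ?andbT ?andbF.
by rewrite -byPoints -byBlocks double_count.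
Qed.

Lemma tdesign2_tdesign1 r :
  r * k.-1 = lam * v.-1 -> 0 < k.-1 -> tdesign V J blk 1 v k r.
Proof.
have [cardV [blkV _]] := D2 => rE k_gt0; split=> //; split=> // S + /eqP /cards1P [p eS].
rewrite eS sub1set => pV.
apply/eqP; rewrite -(eqn_pmul2r k_gt0) rE -(tdesign2_replication pV).
by apply/eqP; congr (_ * _); apply: eq_card => j; rewrite !inE sub1set.
Qed.

Lemma tdesign_derived z :
  z \in V -> tdesign (V :\ z) (der_blocks J blk z) (der_blk blk z) 1 v.-1 k.-1 lam.
Proof.
have [cardV [blkV _]] := D2 => zV; split; first by rewrite -cardV (cardsD1 z V) zV.
split=> [j | S + /eqP /cards1P [p eS]].
  rewrite inE => /andP[jJ zj]; have [Vj <-] := blkV j jJ.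
  by rewrite setSD // (cardsD1 z (blk j)) zj.
rewrite eS sub1set !inE => /andP[pz pV].
rewrite -(tdesign2_pair pV zV pz); apply: eq_card => j.
by rewrite !inE sub1set !inE pz; case: (j \in J) (p \in blk j) (z \in blk j) => [] [] [].
Qed.

Lemma card_res_blocks z :
  #|res_blocks J blk z| = #|J| - #|der_blocks J blk z|.
Proof.
rewrite -cardsDS; last by apply/subsetP => j; rewrite inE => /andP[].
apply: eq_card => j; rewrite /res_blocks /der_blocks !inE.
by case: (j \in J); rewrite /= ?andbT.
Qed.

Lemma tdesign_residual r z : tdesign V J blk 1 v k r -> z \in V ->
  tdesign (V :\ z) (res_blocks J blk z) blk 1 v.-1 k (r - lam).
Proof.
move=> D1 zV; have [cardV [blkV _]] := D2.
split; first by rewrite -cardV (cardsD1 z V) zV.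
split=> [j | S + /eqP /cards1P [p eS]].
  by rewrite inE => /andP[jJ zj]; have [Vj ->] := blkV j jJ; rewrite subsetD1 Vj zj.
rewrite eS sub1set !inE => /andP[pz pV].
rewrite -(tdesign1_replication D1 pV) -(tdesign2_pair pV zV pz) -cardsD.
apply: eq_card => j; rewrite !inE sub1set.
by case: (j \in J) (p \in blk j) (z \in blk j) => [] [] [].
Qed.

Lemma tdesign_dual_derived r y z :
  tdesign V J blk 1 v k r -> quasi_symmetric J blk 0 y -> z \in V ->
  tdesign (der_blocks J blk z) (V :\ z)
          (dual_blk (der_blocks J blk z) (der_blk blk z)) 2 r lam y.-1.
Proof.
move=> D1 QS zV; have [_ [blkV _]] := D2.
split; first exact: tdesign1_replication D1 zV.
split=> [p | S].
  rewrite !inE => /andP[pz pV]; split.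
    by apply/subsetP => j; rewrite inE => /andP[].
  rewrite -(tdesign2_pair pV zV pz); apply: eq_card => j.
  by rewrite !inE pz; case: (j \in J) (p \in blk j) (z \in blk j) => [] [] [].
move=> + /eqP /cards2P [i [j [ij eS]]]; rewrite eS subUset !sub1set !inE.
move=> /andP[/andP[iJ zi] /andP[jJ zj]].
have -> : [set p in V :\ z |
           [set i; j] \subset dual_blk (der_blocks J blk z) (der_blk blk z) p]
         = (blk i :&: blk j) :\ z.
  apply/setP => p; rewrite !inE subUset !sub1set !inE iJ jJ zi zj /=.
  have [Vi _] := blkV i iJ.
  case: (boolP (p \in blk i)) => [/(subsetP Vi) ->|]; last by rewrite ?andbF.
  by case: (p != z) (p \in blk j) => [] [].
have := cardsD1 z (blk i :&: blk j); rewrite inE zi zj add1n.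
by case: (QS i j iJ jJ ij) => -> => [|->].
Qed.

End Designs.

Section IncidenceMatrices.

Local Open Scope ring_scope.
Variable F : fieldType.

Lemma incmx_gram (P I1 I2 : finType) (V : {set P})
    (J1 : {set I1}) (J2 : {set I2}) (blk1 : I1 -> {set P}) (blk2 : I2 -> {set P})
    (a : 'I_#|J1|) (b : 'I_#|J2|) :
  ((incmx F V J1 blk1)^T *m incmx F V J2 blk2) a b =
  #|[set p in V | (p \in blk1 (enum_val a)) && (p \in blk2 (enum_val b))]|%:R.
Proof.
rewrite !mxE card_sep_sum natr_sum [RHS]big_enum_val /=.
by apply: eq_bigr => c _; rewrite !mxE -natrM; case: (_ \in _); case: (_ \in _).
Qed.

Lemma in_dual_code_mulmx m n (G : 'M[F]_(m, n)) (u : 'rV_n) :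
  u *m G^T = 0 -> in_dual_code G u.
Proof. by move=> uG w /submxP [D ->]; rewrite trmx_mul mulmxA uG mul0mx. Qed.

(* A residual block misses z, so removing z from a derived block does not change
   their intersection. *)
Lemma residual_derived_orthogonal (P I : finType) (V : {set P})
    (J : {set I}) (blk : I -> {set P}) (y : nat) (z : P) :
  (forall j, j \in J -> blk j \subset V) -> quasi_symmetric J blk 0 y ->
  y%:R = 0 :> F ->
  (incmx F (V :\ z) (res_blocks J blk z) blk)^T
    *m incmx F (V :\ z) (der_blocks J blk z) (der_blk blk z) = 0.
Proof.
move=> blkV QS y0; apply/matrixP => a b; rewrite incmx_gram mxE.
have := enum_valP a; have := enum_valP b; rewrite !inE.
set i := enum_val a; set j := enum_val b => /andP[jJ zj] /andP[iJ zi].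
have ij : i != j by apply: contraNneq zi => ->.
have -> : [set p in V :\ z | (p \in blk i) && (p \in der_blk blk z j)] = blk i :&: blk j.
  apply/setP => p; rewrite !inE; case: (boolP (p \in blk i)) => [pi|]; last by rewrite !andbF.
  have pz : p != z by apply: contraNneq zi => <-.
  by rewrite pz (subsetP (blkV i iJ)) //= andbT.
by case: (QS i j iJ jJ ij) => ->.
Qed.

End IncidenceMatrices.

Theorem lemma1 (X I : finType) (blk : I -> {set X}) (z : X) :
  tdesign [set: X] [set: I] blk 2 56 12 9 ->
  quasi_symmetric [set: I] blk 0 3 ->
  let V := [set: X] :\ z in
  let Jd := der_blocks [set: I] blk z in
  let Jr := res_blocks [set: I] blk z in
  (* (i) *)
  (tdesign V Jd (der_blk blk z) 1 55 11 9 /\ #|Jd| = 45 /\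
   tdesign Jd V (dual_blk Jd (der_blk blk z)) 2 45 9 2) /\
  (* (ii) *)
  (tdesign V Jr blk 1 55 12 36 /\ #|Jr| = 165 /\
   forall b : 'I_#|Jr|,
     in_dual_code (incmx 'F_3 V Jd (der_blk blk z))^T
                  (col b (incmx 'F_3 V Jr blk))^T).
Proof.
move=> D2 QS V Jd Jr; have zT : z \in [set: X] by rewrite inE.
have D1 : tdesign [set: X] [set: I] blk 1 56 12 45 :=
  tdesign2_tdesign1 D2 (erefl (45 * 11)) isT.
have cJd : #|Jd| = 45 := tdesign1_replication D1 zT.
have cJ : #|[set: I]| = 210.
  by apply/eqP; rewrite -(eqn_pmul2r (isT : 0 < 12)) (tdesign1_card_blocks D1).
split; split.
- exact: (tdesign_derived D2 zT).
- by split=> //; exact: (tdesign_dual_derived D2 D1 QS zT).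
- exact: (tdesign_residual D2 D1 zT).
split; first by rewrite card_res_blocks cJ cJd.
move=> b; apply: in_dual_code_mulmx.
have blkT j : j \in [set: I] -> blk j \subset [set: X] by rewrite subsetT.
by rewrite trmxK tr_col -row_mul (residual_derived_orthogonal z blkT QS) ?row0 ?pchar_Fp_0.
Qed.
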